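(* For almost all $n$-variable Boolean functions $f$ it holds that for every $k$, $k\text{-}NN(f)>\frac{2^{n/2}}{n}$; that is, the fraction of Boolean functions $f:\{0,1\}^n\to\{0,1\}$ such that $k\text{-}NN(f)>2^{n/2}/n$ for all $k$ tends to $1$ as $n\to\infty$.
   Context: Let $f:\{0,1\}^n\to\{0,1\}$ and $k$ a positive integer. A $k$-nearest neighbor representation of $f$ is a pair of disjoint finite sets $(P,N)$ of points of $\mathbb R^n$ such that for every $a\in\{0,1\}^n$, the $k$ smallest Euclidean distances from $a$ to points of $P\cup N$ are all strictly smaller than the remaining $|P\cup N|-k$ distances, and $f(a)=1$ iff at least $k/2$ of the $k$ points of $P\cup N$ closest to $a$ belong to $P$. The size is $|P\cup N|$, and $k\text{-}NN(f)$ is the minimum size of a $k$-nearest neighbor representation of $f$. *)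

From HB Require Import structures.
From mathcomp Require Import all_boot all_order all_algebra.
From mathcomp Require Import finmap.
From mathcomp Require Import all_classical all_reals all_analysis.

Set Implicit Arguments.
Unset Strict Implicit.
Unset Printing Implicit Defensive.

Import Order.TTheory GRing.Theory Num.Theory.
Import numFieldNormedType.Exports.
Local Open Scope ring_scope.

Definition cube (n : nat) := {ffun 'I_n -> bool}.
Definition boolfun (n : nat) := {ffun cube n -> bool}.

Definition embed (R : realType) (n : nat) (a : cube n) : 'rV[R]_n :=
  \row_i ((a i : nat)%:R).

Definition edist (R : realType) (n : nat) (x y : 'rV[R]_n) : R :=
  Num.sqrt (\sum_(i < n) (x ord0 i - y ord0 i) ^+ 2).

(* (P, N) is a k-nearest-neighbour representation of f: P, N disjoint
   finite sets of points; for every a in {0,1}^n there is a set S of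
   exactly k points of P \cup N all strictly closer to a than every
   remaining point of P \cup N (so S is the set of the k nearest points),
   and f a = 1 iff at least k/2 of the points of S lie in P. *)
Definition is_kNN_rep (R : realType) (n k : nat) (f : boolfun n)
  (P N : {fset 'rV[R]_n}) : Prop :=
  [disjoint P & N]%fset /\
  forall a : cube n, exists S : {fset 'rV[R]_n},
    [/\ (S `<=` fsetU P N)%fset,
        #|` S|%fset = k,
        (forall x y, x \in S -> y \in fsetD (fsetU P N) S ->
            edist (embed R a) x < edist (embed R a) y)
      & f a = (k%:R / 2 <= (#|` fsetI S P|%fset)%:R :> R)].

(* k-NN(f): the minimum size |P \cup N| of a k-NN representation,
   as an extended real (infimum; +oo if there is no representation) *)
Definition kNN (R : realType) (n k : nat) (f : boolfun n) : \bar R :=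
  ereal_inf [set x : \bar R | exists P N : {fset 'rV[R]_n},
     is_kNN_rep k f P N /\ x = ((#|` fsetU P N|%fset)%:R)%:E].

Definition good_fraction (R : realType) (n : nat) : R :=
  (#|[set f : boolfun n |
      `[< forall k : nat, (0 < k)%N ->
            ((Num.sqrt (2 ^+ n) / n%:R : R)%:E < kNN R k f)%E >]]|)%:R
  / (2 ^ (2 ^ n))%:R.

From Pilot Require Import Defs.
From HB Require Import structures.
From mathcomp Require Import all_boot all_order all_algebra.
From mathcomp Require Import finmap.
From mathcomp Require Import all_classical all_reals all_analysis.
From mathcomp Require Import ring lra zify.
Import Order.TTheory GRing.Theory Num.Theory.
Import numFieldNormedType.Exports.
Local Open Scope classical_set_scope.
Local Open Scope ring_scope.
Set Implicit Arguments.
Unset Strict Implicit.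
Unset Printing Implicit Defensive.

(* A counting argument.  In a k-NN representation (P, N) of f with m points
   p_1, ..., p_m, the value f a is determined by k, by which p_i lie in P,
   and, for each pair i < j, by the sign of |a - p_i|^2 - |a - p_j|^2 as a
   function of a in {0,1}^n.  That function is affine in a, and the sign of an
   affine function on the cube is determined by its n + 1 Chow parameters
   sum_a sg(L a) and sum_a sg(L a) a_l (a variant of Chow's theorem).
   So at most
   (m+1)^2 2^m (2^(n+1)+1)^((n+1) m(m-1)/2) functions have a representation
   with m points; for m <= 2^(n/2)/n this is at most 2^(2^n - n), a vanishing
   fraction of all 2^(2^n) Boolean functions. *)

Section Cube.
Variable n : nat.
Implicit Types (a : cube n) (o : option 'I_n).

Lemma card_cube : #|{: cube n}| = (2 ^ n)%N.
Proof. by rewrite card_ffun card_bool card_ord. Qed.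

Definition cube_monomial a o : nat := if o is Some l then a l else 1%N.

Definition chow_code (u : cube n -> nat) : {ffun option 'I_n -> 'I_(2 * 2 ^ n).+1} :=
  [ffun o => inord (\sum_a u a * cube_monomial a o)].

Lemma chow_code_bound (u : cube n -> nat) o : (forall a, u a <= 2)%N ->
  (\sum_a u a * cube_monomial a o <= 2 * 2 ^ n)%N.
Proof.
move=> u_le2; rewrite -card_cube mulnC -sum_nat_const.
by apply: leq_sum => a _; rewrite -[2%N]muln1 leq_mul //; case: o => [l|] //=; case: (a l).
Qed.

Lemma chow_code_inj (u v : cube n -> nat) o :
  (forall a, u a <= 2)%N -> (forall a, v a <= 2)%N -> chow_code u = chow_code v ->
  (\sum_a u a * cube_monomial a o = \sum_a v a * cube_monomial a o)%N.
Proof.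
move=> u_le2 v_le2 /ffunP /(_ o) /(congr1 val); rewrite !ffunE /= !inordK //.
all: by rewrite ltnS chow_code_bound.
Qed.

End Cube.

Section ChowParameters.
Variables (R : realDomainType) (n : nat).
Implicit Types (a : cube n) (o : option 'I_n) (L : cube n -> R).

Definition chow_param (g : cube n -> R) o : R := \sum_a g a * (cube_monomial a o)%:R.

Definition cube_affine L :=
  exists c (w : 'I_n -> R), forall a, L a = c + \sum_(l < n) w l * (a l : nat)%:R.

Lemma chow_param_orthogonal (g : cube n -> R) L :
  (forall o, chow_param g o = 0) -> cube_affine L -> \sum_a g a * L a = 0.
Proof.
move=> g0 [c [w Lw]].
have sum_g0 : \sum_a g a = 0.
  by rewrite -[RHS](g0 None); apply: eq_bigr => a _; rewrite mulr1.
under eq_bigr do rewrite Lw mulrDr mulr_sumr.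
rewrite big_split /= -mulr_suml sum_g0 mul0r add0r exchange_big /= big1 // => l _.
under eq_bigr do rewrite mulrCA.
by rewrite -mulr_sumr [X in _ * X](g0 (Some l)) mulr0.
Qed.

Lemma sgr_subr_mulr_ge0 (x y : R) : 0 <= (Num.sg x - Num.sg y) * x.
Proof.
case: (ltgtP x 0) => hx; case: (ltgtP y 0) => hy;
 rewrite ?(ltr0_sg hx) ?(gtr0_sg hx) ?(ltr0_sg hy) ?(gtr0_sg hy) ?hx ?hy ?sgr0; lra.
Qed.

(* Orthogonality of sg L1 - sg L2 to the affine L1 forces every term
   (sg L1 - sg L2) L1 >= 0 of a null sum to vanish. *)
Lemma chow_sgr_eq_nz L1 L2 : cube_affine L1 ->
  chow_param (Num.sg \o L1) =1 chow_param (Num.sg \o L2) ->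
  forall a, L1 a != 0 -> Num.sg (L1 a) = Num.sg (L2 a).
Proof.
move=> aff1 eq_chow a L1a_nz.
have sum0 : \sum_b (Num.sg (L1 b) - Num.sg (L2 b)) * L1 b = 0.
  apply: chow_param_orthogonal aff1 => o; rewrite /chow_param.
  under eq_bigr do rewrite mulrBl.
  by rewrite sumrB; apply/eqP; rewrite subr_eq0; apply/eqP; exact: eq_chow.
have /eqP := psumr_eq0P (fun b _ => sgr_subr_mulr_ge0 (L1 b) (L2 b)) sum0 (i := a) isT.
by rewrite mulf_eq0 (negbTE L1a_nz) orbF subr_eq0 => /eqP.
Qed.

Lemma chow_sgr_eq L1 L2 : cube_affine L1 -> cube_affine L2 ->
  chow_param (Num.sg \o L1) =1 chow_param (Num.sg \o L2) ->
  forall a, Num.sg (L1 a) = Num.sg (L2 a).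
Proof.
move=> aff1 aff2 eq_chow a.
have [L1a0|] := eqVneq (L1 a) 0; last exact: chow_sgr_eq_nz.
have [L2a0|L2a_nz] := eqVneq (L2 a) 0; first by rewrite L1a0 L2a0.
by rewrite (chow_sgr_eq_nz aff2 (fun o => esym (eq_chow o)) L2a_nz).
Qed.

Definition sqdist a (p : 'rV[R]_n) : R := \sum_(l < n) ((a l : nat)%:R - p ord0 l) ^+ 2.

Lemma sqdistB_affine p q : cube_affine (fun a => sqdist a p - sqdist a q).
Proof.
exists (\sum_(l < n) (p ord0 l ^+ 2 - q ord0 l ^+ 2)), (fun l => 2 * (q ord0 l - p ord0 l)).
move=> a; rewrite /sqdist -sumrB -big_split; by apply: eq_bigr => l _ /=; ring.
Qed.

Definition dist_cmp a p q : nat :=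
  ((sqdist a q <= sqdist a p)%R + (sqdist a q < sqdist a p)%R)%N.

Lemma dist_cmp_le2 a p q : (dist_cmp a p q <= 2)%N.
Proof. exact: leq_add (leq_b1 _) (leq_b1 _). Qed.

Lemma dist_cmpE a p q : (dist_cmp a p q)%:R = Num.sg (sqdist a p - sqdist a q) + 1.
Proof.
rewrite /dist_cmp; case: (ltgtP (sqdist a p) (sqdist a q)) => cmp.
- by rewrite ltr0_sg ?subr_lt0 // addNr.
- by rewrite gtr0_sg ?subr_gt0.
- by rewrite cmp subrr sgr0 add0r.
Qed.

Lemma dist_cmp_eq0 a p q : (dist_cmp a p q == 0%N) = (sqdist a p < sqdist a q).
Proof. by rewrite /dist_cmp; case: (ltgtP (sqdist a p) (sqdist a q)). Qed.

Lemma dist_cmp_eq2 a p q : (dist_cmp a p q == 2%N) = (sqdist a q < sqdist a p).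
Proof. by rewrite /dist_cmp; case: (ltgtP (sqdist a p) (sqdist a q)). Qed.

Lemma natr_sum_dist_cmp p q o :
  (\sum_a dist_cmp a p q * cube_monomial a o)%N%:R =
  chow_param (fun a => Num.sg (sqdist a p - sqdist a q)) o
    + \sum_a (cube_monomial a o)%:R :> R.
Proof.
rewrite natr_sum /chow_param -big_split; apply: eq_bigr => a _.
by rewrite natrM dist_cmpE mulrDl mul1r.
Qed.

Lemma chow_code_dist_cmp p1 q1 p2 q2 :
  chow_code (fun a => dist_cmp a p1 q1) = chow_code (fun a => dist_cmp a p2 q2) ->
  forall a, dist_cmp a p1 q1 = dist_cmp a p2 q2.
Proof.
move=> eq_code a; apply/eqP; rewrite -(eqr_nat R) !dist_cmpE; apply/eqP; congr (_ + 1).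
apply: (chow_sgr_eq (sqdistB_affine p1 q1) (sqdistB_affine p2 q2)) => o.
have := chow_code_inj o (fun b => dist_cmp_le2 b p1 q1) (fun b => dist_cmp_le2 b p2 q2)
  eq_code.
move/(congr1 (fun m => m%:R : R)).
by rewrite !natr_sum_dist_cmp => /addIr.
Qed.

End ChowParameters.

Lemma count_nth_iota (T : Type) (x0 : T) (s : seq T) (Q : pred T) :
  count (fun i => Q (nth x0 s i)) (iota 0 (size s)) = count Q s.
Proof. by rewrite -[in RHS](mkseq_nth x0 s) count_map. Qed.

Lemma count_mem_fset (T : choiceType) (U A : {fset T}) :
  (A `<=` U)%fset -> count (mem A) U = #|` A|.
Proof.
move=> AU; rewrite -size_filter; apply/perm_size/uniq_perm.
- exact: filter_uniq (fset_uniq U).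
- exact: fset_uniq.
by move=> x; rewrite mem_filter andb_idr // => /(fsubsetP AU).
Qed.

Lemma mem_nearest (T : choiceType) (R : numDomainType) (d : T -> R) (U S : {fset T}) :
  (S `<=` U)%fset -> (forall x y, x \in S -> y \in (U `\` S)%fset -> d x < d y) ->
  forall x, x \in U -> (x \in S) = (count (fun y => d y < d x)%R U < #|` S|)%N.
Proof.
move=> SU near x xU; have [xS|xNS] := boolP (x \in S).
  apply/esym; rewrite (cardfsD1 x S) xS add1n ltnS -size_filter.
  apply: uniq_leq_size => [|y]; first exact: filter_uniq (fset_uniq U).
  rewrite mem_filter in_fsetD1 => /andP[dyx yU]; apply/andP; split.
    by apply: contraTneq dyx => ->; rewrite ltxx.
  by apply: contraTT dyx => yNS; rewrite lt_gtF // near // in_fsetD yNS.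
apply/esym; apply/negbTE; rewrite -leqNgt -size_filter.
apply: uniq_leq_size (fset_uniq S) _ => y yS.
by rewrite mem_filter (fsubsetP SU _ yS) andbT near // in_fsetD xNS.
Qed.

Definition knn_vote (k m : nat) (inP : pred nat) (nearer : rel nat) : bool :=
  (k <= (count (fun i => inP i && (count (nearer ^~ i) (iota 0 m) < k)) (iota 0 m)).*2)%N.

Lemma eq_knn_vote k m (inP1 inP2 : pred nat) (nearer1 nearer2 : rel nat) :
  (forall i, i < m -> inP1 i = inP2 i)%N ->
  (forall i j, i < m -> j < m -> nearer1 i j = nearer2 i j)%N ->
  knn_vote k m inP1 nearer1 = knn_vote k m inP2 nearer2.
Proof.
move=> eq_inP eq_nearer; rewrite /knn_vote; congr (_ <= _.*2)%N.
apply: eq_in_count => i; rewrite mem_iota => /= im; rewrite eq_inP //; congr (_ && (_ < _))%N.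
by apply: eq_in_count => j; rewrite mem_iota => /= jm; rewrite eq_nearer.
Qed.

Section Representation.
Variables (R : realType) (n : nat).
Local Notation pts P N := (P `|` N)%fset.

Lemma edist_embed (a : cube n) (x : 'rV[R]_n) :
  Defs.edist (embed R a) x = Num.sqrt (sqdist a x).
Proof. by congr Num.sqrt; apply: eq_bigr => l _; rewrite mxE. Qed.

Lemma sqdist_lt_of_edist (a : cube n) (x y : 'rV[R]_n) :
  Defs.edist (embed R a) x < Defs.edist (embed R a) y -> sqdist a x < sqdist a y.
Proof.
by rewrite !edist_embed ltNge => /negP lt; rewrite ltNge; apply/negP => /ler_wsqrtr.
Qed.

Lemma kNN_rep_vote k f (P N : {fset 'rV[R]_n}) : is_kNN_rep k f P N -> forall a,
  f a = knn_vote k #|` pts P N| (fun i => nth 0 (pts P N) i \in P)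
          (fun i j => sqdist a (nth 0 (pts P N) i) < sqdist a (nth 0 (pts P N) j)).
Proof.
move=> [_ rep] a; have [S [SU cardS near ->]] := rep a; set U := pts P N.
rewrite ler_pdivrMr // -natrM ler_nat muln2 /knn_vote; congr (_ <= _.*2)%N.
rewrite -(count_mem_fset (fsubset_trans (fsubsetIl S P) SU)) -(count_nth_iota 0).
apply: eq_in_count => i; rewrite mem_iota => /= iU; set x := nth 0 U i.
rewrite in_fsetI andbC (count_nth_iota 0 U (fun y => sqdist a y < sqdist a x)) -cardS.
rewrite -(mem_nearest (d := sqdist a) SU) ?mem_nth // => y z yS zNS.
exact/sqdist_lt_of_edist/near.
Qed.

Lemma kNN_rep_size_ge k f (P N : {fset 'rV[R]_n}) :
  is_kNN_rep k f P N -> (k <= #|` pts P N|)%N.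
Proof.
by move=> [_ rep]; have [S [SU <- _ _]] := rep [ffun=> false]; exact: fsubset_leq_card.
Qed.

End Representation.

Local Notation ordered_pairs M := {p : 'I_M * 'I_M | (p.1 < p.2)%N}.

Local Notation rep_code n M := ('I_M.+1 * 'I_M.+1 * {ffun 'I_M -> bool} *
  {ffun ordered_pairs M -> {ffun option 'I_n -> 'I_(2 * 2 ^ n).+1}})%type.

Section Encoding.
Variables (R : realType) (n M : nat).
Local Notation pts P N := (P `|` N)%fset.

Definition encode_rep (k : nat) (P N : {fset 'rV[R]_n}) : rep_code n M :=
  let U := pts P N in
  (inord k, inord #|` U|, [ffun i : 'I_M => nth 0 U i \in P],
   [ffun p : ordered_pairs M =>
      chow_code (fun a => dist_cmp a (nth 0 U (val p).1) (nth 0 U (val p).2))]).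

Lemma nearer_of_chow_code (U1 U2 : seq 'rV[R]_n) :
  (forall (i j : 'I_M), (i < j)%N ->
     chow_code (fun a => dist_cmp a (nth 0 U1 i) (nth 0 U1 j)) =
     chow_code (fun a => dist_cmp a (nth 0 U2 i) (nth 0 U2 j))) ->
  forall a i j, (i < M)%N -> (j < M)%N ->
    (sqdist a (nth 0 U1 i) < sqdist a (nth 0 U1 j)) =
    (sqdist a (nth 0 U2 i) < sqdist a (nth 0 U2 j)).
Proof.
move=> eq_code a i j iM jM.
have [ij|ji|<-] := ltngtP i j; last by rewrite !ltxx.
- rewrite -!dist_cmp_eq0; congr (_ == _).
  exact: chow_code_dist_cmp (eq_code (Ordinal iM) (Ordinal jM) ij) a.
- rewrite -!dist_cmp_eq2; congr (_ == _).
  exact: chow_code_dist_cmp (eq_code (Ordinal jM) (Ordinal iM) ji) a.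
Qed.

Lemma encode_rep_inj k1 k2 f1 f2 (P1 N1 P2 N2 : {fset 'rV[R]_n}) :
  is_kNN_rep k1 f1 P1 N1 -> is_kNN_rep k2 f2 P2 N2 ->
  (#|` pts P1 N1| <= M)%N -> (#|` pts P2 N2| <= M)%N ->
  encode_rep k1 P1 N1 = encode_rep k2 P2 N2 -> f1 = f2.
Proof.
move=> rep1 rep2 size1 size2 [/(congr1 val) eq_k /(congr1 val) eq_size eq_lab eq_cmp].
have k1_le := kNN_rep_size_ge rep1; have k2_le := kNN_rep_size_ge rep2.
move: eq_k eq_size; rewrite /= !inordK ?ltnS ?(leq_trans k1_le) ?(leq_trans k2_le) //.
move=> eq_k eq_size; subst k2; apply/ffunP => a.
rewrite (kNN_rep_vote rep1) (kNN_rep_vote rep2) -eq_size.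
apply: eq_knn_vote => [i im|i j im jm].
  by move/ffunP/(_ (Ordinal (leq_trans im size1))): eq_lab; rewrite !ffunE.
apply: (nearer_of_chow_code _ a); rewrite ?(leq_trans im) ?(leq_trans jm) //.
by move=> i' j' ij; move/ffunP/(_ (exist _ (i', j') ij)): eq_cmp; rewrite !ffunE.
Qed.

End Encoding.

Lemma card_ordered_pairs M : (2 * #|{: ordered_pairs M}| <= M * M)%N.
Proof.
rewrite card_sig; set A := [set p : 'I_M * 'I_M | (p.1 < p.2)%N]%SET.
have -> : #|[pred p : 'I_M * 'I_M | (p.1 < p.2)%N]| = #|A|.
  by apply: eq_card => p; rewrite !inE.
have swap_inj : injective (fun p : 'I_M * 'I_M => (p.2, p.1)) by move=> [a b] [c d] [-> ->].
have : (#|A| <= #|~: A|)%N.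
  rewrite -(card_imset A swap_inj); apply: subset_leq_card.
  by apply/fintype.subsetP => q /imsetP[p]; rewrite !inE => p12 ->; rewrite -leqNgt ltnW.
by have := cardsC A; rewrite card_prod card_ord; lia.
Qed.

Lemma card_rep_code n M : (M < 2 ^ n)%N ->
  (#|{: rep_code n M}| <= 2 ^ (n + n + M + (n + 2) * n.+1 * #|{: ordered_pairs M}|))%N.
Proof.
move=> M_lt; set Y := #|{: ordered_pairs M}|.
rewrite !card_prod !card_ffun !card_ord card_bool card_option card_ord -/Y -expnM.
have base_le : ((2 * 2 ^ n).+1 <= 2 ^ (n + 2))%N by rewrite expnD; lia.
have pow_le : ((2 * 2 ^ n).+1 ^ (n.+1 * Y) <= 2 ^ ((n + 2) * n.+1 * Y))%N.
  rewrite -mulnA [(2 ^ ((n + 2) * _))%N]expnM.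
  by case: (posnP (n.+1 * Y)) => [->|e_gt0] //; rewrite leq_exp2r.
rewrite [(2 ^ (_ + _ + _ + _))%N]expnD; apply: leq_mul pow_le.
by rewrite !expnD; apply: leq_mul => //; apply: leq_mul.
Qed.

(* For n > 0 this is the integer part of 2^(n/2) / n. *)
Definition max_rep_size n : nat :=
  \max_(m < (2 ^ n).+1 | (m * m * (n * n) <= 2 ^ n)%N) m.

Lemma max_rep_size_sq n : (max_rep_size n * max_rep_size n * (n * n) <= 2 ^ n)%N.
Proof.
apply: (big_ind (fun m => m * m * (n * n) <= 2 ^ n)%N) => // x y x_le y_le.
by case: (leqP x y).
Qed.

Lemma leq_max_rep_size n m : (0 < n)%N ->
  (m * m * (n * n) <= 2 ^ n)%N -> (m <= max_rep_size n)%N.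
Proof.
move=> n_gt0 m_le; have m_lt : (m < (2 ^ n).+1)%N.
  by rewrite ltnS (leq_trans _ m_le) //; case: (m) => // m'; nia.
exact: (@leq_bigmax_cond _ (fun i : 'I__ => i * i * (n * n) <= 2 ^ n)%N _ (Ordinal m_lt) m_le).
Qed.

Lemma pow2_ge_linear n : (10 <= n)%N -> (16 * (3 * n + 1) <= 3 * 2 ^ n)%N.
Proof. by move/subnK <-; elim: (n - 10)%N => [|m IH] //; rewrite addSn expnS; lia. Qed.

Lemma rep_code_exponent_le n M Y : (10 <= n)%N -> (M * M * (n * n) <= 2 ^ n)%N ->
  (2 * Y <= M * M)%N -> (n + n + M + (n + 2) * n.+1 * Y + n.+1 <= 2 ^ n)%N.
Proof.
move=> n_ge M_le Y_le.
have M_term : (16 * M <= 2 ^ n)%N.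
  have M_le_sq : (M <= M * M)%N by case: (M) => // M'; nia.
  by apply: leq_trans M_le; rewrite mulnC leq_mul //; nia.
have Y_term : (4 * ((n + 2) * n.+1 * Y) <= 3 * 2 ^ n)%N.
  have n_sq : (4 * ((n + 2) * n.+1) <= 3 * (n * n) * 2)%N by nia.
  apply: (@leq_trans (3 * (n * n) * 2 * Y)); first by rewrite mulnA leq_mul2r n_sq orbT.
  rewrite -!mulnA leq_mul2l; apply/orP; right.
  by apply: leq_trans M_le; rewrite mulnA mulnC leq_mul2r Y_le orbT.
by have := pow2_ge_linear n_ge; lia.
Qed.

Section BadFunctions.
Variable R : realType.

Definition good_set n := [set f : boolfun n | `[< forall k : nat, (0 < k)%N ->
  ((Num.sqrt (2 ^+ n) / n%:R : R)%:E < kNN R k f)%E >]]%SET.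
Arguments good_set : clear implicits.

Lemma good_fractionE n : good_fraction R n = #|good_set n|%:R / (2 ^ (2 ^ n))%:R.
Proof. by []. Qed.

Lemma kNN_le_rep n k (f : boolfun n) (t : R) : (kNN R k f <= t%:E)%E ->
  exists P N : {fset 'rV[R]_n}, is_kNN_rep k f P N /\ #|` (P `|` N)%fset|%:R <= t.
Proof.
move=> kNN_le; pose has_rep (m : nat) :=
  `[< exists P N : {fset 'rV[R]_n}, is_kNN_rep k f P N /\ #|` (P `|` N)%fset| = m >].
have [ex|nex] := pselect (exists m, has_rep m).
  have [m /asboolP[P [N [rep <-]]] min_m] := ex_minnP ex; exists P, N; split => //.
  rewrite -lee_fin (le_trans _ kNN_le) //; apply/ereal_infP => _ [P' [N' [rep' ->]]].
  by rewrite lee_fin ler_nat min_m //; apply/asboolP; exists P', N'.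
move: kNN_le; rewrite /kNN (_ : [set x | _] = set0) ?ereal_inf0 ?leNgt ?ltey //.
apply/seteqP; split => // x [P [N [rep _]]]; apply: nex.
by exists #|` (P `|` N)%fset|; apply/asboolP; exists P, N.
Qed.

Lemma sq_le_of_natr_le_sqrt n m : (0 < n)%N ->
  m%:R <= Num.sqrt (2 ^+ n) / n%:R :> R -> (m * m * (n * n) <= 2 ^ n)%N.
Proof.
move=> n_gt0; rewrite ler_pdivlMr ?ltr0n // -natrM => le_sqrt.
rewrite mulnACA -(ler_nat R) natrM natrX -expr2.
by rewrite -ler_sqrt ?exprn_ge0 // sqrtr_sqr ger0_norm.
Qed.

Lemma small_rep_of_not_good n f : (0 < n)%N -> f \notin good_set n ->
  exists k (P N : {fset 'rV[R]_n}),
    is_kNN_rep k f P N /\ (#|` (P `|` N)%fset| <= max_rep_size n)%N.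
Proof.
move=> n_gt0; rewrite inE => /asboolPn /existsNP[k /not_implyP[_ /negP]].
rewrite -leNgt => /kNN_le_rep[P [N [rep size_le]]].
by exists k, P, N; split => //; exact/leq_max_rep_size/sq_le_of_natr_le_sqrt.
Qed.

Lemma card_not_good n : (0 < n)%N ->
  (#|~: good_set n| <= #|{: rep_code n (max_rep_size n)}|.+1)%N.
Proof.
move=> n_gt0; set M := max_rep_size n.
pose coded f (c : rep_code n M) := exists k (P N : {fset 'rV[R]_n}),
  [/\ is_kNN_rep k f P N, (#|` (P `|` N)%fset| <= M)%N & c = encode_rep M k P N].
pose code f := [pick c | `[< coded f c >] ].
have codeP f : f \in ~: good_set n -> exists2 c, code f = Some c & coded f c.
  rewrite inE => /(small_rep_of_not_good n_gt0)[k [P [N [rep size_le]]]].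
  rewrite /code; case: pickP => [c /asboolP|none]; first by exists c.
  by have := none (encode_rep M k P N); rewrite asboolT //; exists k, P, N.
rewrite -card_option; apply: (@leq_card_in _ _ code) => f1 f2.
move=> /codeP[_ -> [k1 [P1 [N1 [rep1 le1 ->]]]]] /codeP[_ -> [k2 [P2 [N2 [rep2 le2 ->]]]]].
by move/Some_inj; apply: encode_rep_inj.
Qed.

Lemma card_not_good_mul_le n : (10 <= n)%N -> (#|~: good_set n| * 2 ^ n <= 2 ^ (2 ^ n))%N.
Proof.
move=> n_ge; set M := max_rep_size n.
pose E := (n + n + M + (n + 2) * n.+1 * #|{: ordered_pairs M}|)%N.
have E_le : (E + n.+1 <= 2 ^ n)%N.
  exact: rep_code_exponent_le n_ge (max_rep_size_sq n) (card_ordered_pairs M).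
have code_le : (#|{: rep_code n M}| <= 2 ^ E)%N.
  by apply: card_rep_code; rewrite /E in E_le; lia.
have bad_le : (#|~: good_set n| <= 2 ^ E.+1)%N.
  apply: leq_trans (card_not_good (leq_trans _ n_ge)) _ => //.
  by apply: leq_ltn_trans code_le _; rewrite ltn_exp2l.
apply: leq_trans (leq_mul bad_le (leqnn _)) _.
by rewrite -expnD; apply: leq_pexp2l; rewrite // addSnnS.
Qed.

Lemma good_fraction_bounds n : (10 <= n)%N -> 1 - 2^-1 ^+ n <= good_fraction R n <= 1.
Proof.
move=> n_ge; rewrite good_fractionE.
have card_split : (#|good_set n| + #|~: good_set n| = 2 ^ (2 ^ n))%N.
  by rewrite cardsC card_ffun card_bool card_cube.
have bad_le : #|~: good_set n|%:R <= 2^-1 ^+ n * (2 ^ (2 ^ n))%N%:R :> R.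
  by rewrite exprVn mulrC ler_pdivlMr ?exprn_gt0 // -natrX -natrM ler_nat card_not_good_mul_le.
have D_gt0 : (0 : R) < (2 ^ (2 ^ n))%N%:R by rewrite ltr0n expn_gt0.
apply/andP; split; last by rewrite ler_pdivrMr // mul1r ler_nat -card_split leq_addr.
rewrite -card_split natrD in bad_le.
by rewrite ler_pdivlMr // mulrBl mul1r -card_split natrD; lra.
Qed.

End BadFunctions.

Theorem theorem6 (R : realType) :
  good_fraction R @ \oo --> (1 : R).
Proof.
apply: (squeeze_cvgr (f := fun n => 1 - 2^-1 ^+ n) (h := fun=> 1)).
- by exists 10%N => // n /= n_ge; exact: good_fraction_bounds.
- rewrite -[X in _ --> X]subr0; apply: cvgB; first exact: cvg_cst.
  by apply: cvg_expr; rewrite ger0_norm ?invr_ge0 // invf_lt1 //; lra.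
- exact: cvg_cst.
Qed.
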